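(* Fix bidder $i$ and $v_{-i}$, and assume $f_{i,k}>0$ for all $k$. Suppose $k\mapsto x_i(z_{i,k},v_{-i})$ is non-decreasing and the actual payments $p_i(z_{i,k},v_{-i})\ge 0$ satisfy $p_i(z_{i,\ell},v_{-i})^2= z_{i,\ell}x_i(z_{i,\ell},v_{-i})-\sum_{j=1}^{\ell-1}(z_{i,j+1}-z_{i,j})x_i(z_{i,j},v_{-i})$ for all $\ell$. Then $$\sqrt{\sum_{k=1}^{K_i} f_{i,k}\,\varphi_{i,k}\,x_i(z_{i,k},v_{-i})}\ \ge\ \sum_{k=1}^{K_i} f_{i,k}\,p_i(z_{i,k},v_{-i}).$$
   Context: Bidder $i$'s type space is $V_i=\{z_{i,1}<\dots<z_{i,K_i}\}\subset[0,\infty)$, with the convention $z_{i,K_i+1}=z_{i,K_i}$; $f_{i,k}$ is the probability of $z_{i,k}$ and $F_{i,k}=\sum_{j\le k}f_{i,j}$. The (discrete) virtual value is $\varphi_{i,k}=z_{i,k}-(z_{i,k+1}-z_{i,k})\frac{1-F_{i,k}}{f_{i,k}}$. $x_i(\cdot,v_{-i}):V_i\to[0,1]$ is bidder $i$'s allocation given the others' types. *)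

From Stdlib Require Import Reals Lra Lia.
Open Scope R_scope.

(* sum1 n g = g 1 + g 2 + ... + g n  (indices 1..n, as in the paper) *)
Fixpoint sum1 (n : nat) (g : nat -> R) : R :=
  match n with
  | O => 0
  | S m => sum1 m g + g (S m)
  end.

(* z_{k+1} with the convention z_{K+1} = z_K *)
Definition znext (K : nat) (z : nat -> R) (k : nat) : R :=
  if Nat.ltb k K then z (S k) else z K.

Definition cdf (f : nat -> R) (k : nat) : R := sum1 k f.

Definition virt (K : nat) (z f : nat -> R) (k : nat) : R :=
  z k - (znext K z k - z k) * (1 - cdf f k) / f k.

(* The expected virtual surplus equals the expected value of z_l x_l - sum_{j<l} (z_{j+1} - z_j) x_j:
   exchanging the order of summation turns sum_l f_l sum_{j<l} into sum_j (1 - F_j), which is exactly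
   the information-rent term of the virtual value.  By the payment identity this expectation is
   E[p^2], and E[p] <= sqrt(E[p^2]) is Jensen's inequality (the variance of p is nonnegative). *)

From Stdlib Require Import Reals Lra Lia.
Open Scope R_scope.

Lemma sum1_ext n g h :
  (forall k, (1 <= k <= n)%nat -> g k = h k) -> sum1 n g = sum1 n h.
Proof.
  induction n as [|n IH]; intros Hgh; simpl; [reflexivity|].
  rewrite IH by (intros; apply Hgh; lia).
  rewrite Hgh by lia. reflexivity.
Qed.

Lemma sum1_add n g h : sum1 n (fun k => g k + h k) = sum1 n g + sum1 n h.
Proof. induction n as [|n IH]; simpl; [lra|]. rewrite IH. lra. Qed.

Lemma sum1_scal n c g : sum1 n (fun k => c * g k) = c * sum1 n g.
Proof. induction n as [|n IH]; simpl; [lra|]. rewrite IH. lra. Qed.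

Lemma sum1_ge0 n g : (forall k, (1 <= k <= n)%nat -> 0 <= g k) -> 0 <= sum1 n g.
Proof.
  induction n as [|n IH]; intros Hg; simpl; [lra|].
  assert (0 <= g (S n)) by (apply Hg; lia).
  assert (0 <= sum1 n g) by (apply IH; intros; apply Hg; lia).
  lra.
Qed.

Lemma sum1_mul_prefix n (f g : nat -> R) :
  sum1 n (fun k => f k * sum1 (k - 1) g) = sum1 n (fun j => g j * (cdf f n - cdf f j)).
Proof.
  induction n as [|n IH]; simpl; [reflexivity|].
  rewrite IH, Nat.sub_0_r, Rminus_diag, Rmult_0_r, Rplus_0_r.
  rewrite <- sum1_scal, <- sum1_add.
  apply sum1_ext. intros. unfold cdf. simpl. ring.
Qed.

Lemma expected_virtual_surplus (K : nat) (z f x : nat -> R) :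
  (forall k, (1 <= k <= K)%nat -> f k <> 0) -> cdf f K = 1 ->
  sum1 K (fun k => f k * virt K z f k * x k)
  = sum1 K (fun k => f k * (z k * x k - sum1 (k - 1) (fun j => (z (S j) - z j) * x j))).
Proof.
  intros Hf0 HF.
  transitivity (sum1 K (fun k => f k * z k * x k
                               + -1 * (f k * sum1 (k - 1) (fun j => (z (S j) - z j) * x j)))).
  - rewrite sum1_add, sum1_scal, sum1_mul_prefix, <- sum1_scal, <- sum1_add.
    apply sum1_ext. intros k Hk.
    unfold virt, znext. specialize (Hf0 k Hk).
    destruct (Nat.ltb_spec k K) as [HkK | HkK].
    + rewrite HF. field. exact Hf0.
    + assert (k = K) as -> by lia. rewrite HF. field. exact Hf0.
  - apply sum1_ext. intros. ring.
Qed.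

Lemma sqr_mean_le_mean_sqr n (f p : nat -> R) :
  (forall k, (1 <= k <= n)%nat -> 0 <= f k) -> sum1 n f = 1 ->
  sum1 n (fun k => f k * p k) ^ 2 <= sum1 n (fun k => f k * p k ^ 2).
Proof.
  intros Hf Hsum.
  set (m := sum1 n (fun k => f k * p k)).
  assert (Hvar : 0 <= sum1 n (fun k => f k * (p k - m) ^ 2)).
  { apply sum1_ge0. intros k Hk. apply Rmult_le_pos; [apply Hf; exact Hk | apply pow2_ge_0]. }
  assert (Hexpand : sum1 n (fun k => f k * (p k - m) ^ 2)
                    = sum1 n (fun k => f k * p k ^ 2) + (-2 * m) * sum1 n (fun k => f k * p k)
                      + m ^ 2 * sum1 n f).
  { rewrite <- !sum1_scal, <- !sum1_add. apply sum1_ext. intros. ring. }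
  fold m in Hexpand.
  rewrite Hsum in Hexpand. lra.
Qed.

Lemma mean_le_sqrt_mean_sqr n (f p : nat -> R) :
  (forall k, (1 <= k <= n)%nat -> 0 <= f k) -> sum1 n f = 1 ->
  sum1 n (fun k => f k * p k) <= sqrt (sum1 n (fun k => f k * p k ^ 2)).
Proof.
  intros Hf Hsum.
  set (m := sum1 n (fun k => f k * p k)).
  apply Rle_trans with (Rabs m); [apply Rle_abs|].
  rewrite <- sqrt_Rsqr_abs. apply sqrt_le_1_alt.
  rewrite Rsqr_pow2. exact (sqr_mean_le_mean_sqr n f p Hf Hsum).
Qed.

Theorem mainTheorem4 (K : nat) (z f x p : nat -> R)
  (HK : (1 <= K)%nat)
  (Hz0 : forall k, (1 <= k <= K)%nat -> 0 <= z k)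
  (Hzinc : forall k, (1 <= k < K)%nat -> z k < z (S k))
  (Hfpos : forall k, (1 <= k <= K)%nat -> 0 < f k)
  (Hfsum : sum1 K f = 1)
  (Hx01 : forall k, (1 <= k <= K)%nat -> 0 <= x k <= 1)
  (Hxmono : forall k, (1 <= k < K)%nat -> x k <= x (S k))
  (Hp0 : forall k, (1 <= k <= K)%nat -> 0 <= p k)
  (Hpay : forall l, (1 <= l <= K)%nat ->
     (p l) ^ 2 = z l * x l - sum1 (l - 1) (fun j => (z (S j) - z j) * x j)) :
  sqrt (sum1 K (fun k => f k * virt K z f k * x k)) >= sum1 K (fun k => f k * p k).
Proof.
  assert (Hf0 : forall k, (1 <= k <= K)%nat -> 0 <= f k)
    by (intros k Hk; left; exact (Hfpos k Hk)).
  rewrite expected_virtual_surplus; [| intros k Hk; apply Rgt_not_eq, Hfpos, Hk | exact Hfsum].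
  rewrite (sum1_ext K _ (fun k => f k * p k ^ 2))
    by (intros k Hk; rewrite Hpay by exact Hk; reflexivity).
  apply Rle_ge, mean_le_sqrt_mean_sqr; assumption.
Qed.
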